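(* Let $X$ be a random variable over $\{0,1\}^n$ with $\mathrm{H}^{\delta}_\infty(X)<k$ (where $\delta\ge0$), let $Y$ be a random variable over $\{0,1\}^n$ with $\mathrm{H}_\infty(Y)\ge k$, and let $\{\mathsf{D}(x)\}_{x\in\{0,1\}^n}$ be $4$-wise independent random variables each uniform on $\{-1,1\}$. Then with probability at least $\frac1{17}$ over $\mathsf{D}$, $$\mathsf{Adv}^{\mathsf{D}}(X;Y)\ge\frac13\cdot2^{-k/2}\delta.$$
   Context: $P_X(x)=\Pr[X=x]$; $\mathsf{Adv}^{\mathsf{D}}(X;Y)=\big|\sum_x\mathsf{D}(x)(P_X(x)-P_Y(x))\big|$. Min-entropy: $\mathrm{H}_\infty(Y)=-\log_2\max_y P_Y(y)$. Statistical distance: $d_1(X;Y)=\frac12\sum_z|P_X(z)-P_Y(z)|$. Smooth min-entropy: $\mathrm{H}^{\delta}_\infty(X)=\max\{\mathrm{H}_\infty(Y): Y \text{ finitely supported},\ d_1(X;Y)\le\delta\}$. A family of random variables is $4$-wise independent if any $4$ of them with distinct indices are mutually independent. *)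

From HB Require Import structures.
From mathcomp Require Import all_boot all_order all_algebra.
From mathcomp Require Import all_classical all_reals all_analysis.
Set Implicit Arguments. Unset Strict Implicit. Unset Printing Implicit Defensive.
Import Order.TTheory GRing.Theory Num.Theory.
Local Open Scope ring_scope.

Section Defs.
Variable R : realType.

(* Universe of outcomes: bitstrings [seq bool].  A finitely supported
   distribution is a mass function P together with a duplicate-free list s
   containing its support. *)
Definition is_fsdist (P : seq bool -> R) (s : seq (seq bool)) : Prop :=
  [/\ uniq s, (forall z : seq bool, 0 <= P z), (forall z : seq bool, z \notin s -> P z = 0)
    & \sum_(z <- s) P z = 1].

Definition bits (n : nat) : seq (seq bool) :=
  [seq val x | x <- enum {: n.-tuple bool}].

Definition log2 (x : R) : R := ln x / ln 2.

Definition Hmin (P : seq bool -> R) (s : seq (seq bool)) : R :=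
  - log2 (\big[Num.max/0]_(z <- s) P z).

Definition d1 (P : seq bool -> R) (s : seq (seq bool)) (Q : seq bool -> R) (t : seq (seq bool)) : R :=
  2^-1 * \sum_(z <- undup (s ++ t)) `|P z - Q z|.

Definition is_smooth_minent (delta : R) (P : seq bool -> R) (s : seq (seq bool)) (h : R) : Prop :=
  (exists (Q : seq bool -> R) (t : seq (seq bool)),
      [/\ is_fsdist Q t, d1 P s Q t <= delta & Hmin Q t = h]) /\
  (forall (Q : seq bool -> R) (t : seq (seq bool)),
      is_fsdist Q t -> d1 P s Q t <= delta -> Hmin Q t <= h).

(* D is a random function {0,1}^n -> {-1,1}; b = true encodes +1 *)
Definition sgnb (b : bool) : R := if b then 1 else -1.

Definition Prob (n : nat) (mu : {ffun n.-tuple bool -> bool} -> R)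
    (A : pred {ffun n.-tuple bool -> bool}) : R :=
  \sum_(d | A d) mu d.

Definition is_pmf (n : nat) (mu : {ffun n.-tuple bool -> bool} -> R) : Prop :=
  (forall d, 0 <= mu d) /\ \sum_d mu d = 1.

Definition uniform_signs (n : nat) (mu : {ffun n.-tuple bool -> bool} -> R) : Prop :=
  forall (x : n.-tuple bool) (b : bool), Prob mu (fun d => d x == b) = 2^-1.

Definition fourwise_indep (n : nat) (mu : {ffun n.-tuple bool -> bool} -> R) : Prop :=
  forall (s : seq (n.-tuple bool)), uniq s -> (size s <= 4)%N ->
  forall (b : n.-tuple bool -> bool),
    Prob mu (fun d => all (fun x => d x == b x) s)
    = \prod_(x <- s) Prob mu (fun d => d x == b x).

Definition Adv (n : nat) (d : {ffun n.-tuple bool -> bool})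
    (PX PY : seq bool -> R) : R :=
  `| \sum_(x : n.-tuple bool) sgnb (d x) * (PX (val x) - PY (val x)) |.

End Defs.

From HB Require Import structures.
From mathcomp Require Import all_boot all_order all_algebra.
From mathcomp Require Import all_classical all_reals all_analysis.
From mathcomp Require Import ring lra.
Import Order.TTheory GRing.Theory Num.Theory.
Local Open Scope ring_scope.

(* Write [p = 2^-k] and [a x = P_X(x) - P_Y(x)], so that [Adv^D(X;Y) = |Z|] for the
   signed sum [Z = sum_x D(x) a x].  If the mass [E] that [X] puts above the level [p]
   were at most [delta], capping [X] at [p] and redistributing that mass below the cap
   would give a [delta]-close distribution of min-entropy [>= k]; hence [E > delta].
   Since [P_Y <= p] and at most [1/p] points carry more than [p] under [X], a
   Cauchy-Schwarz bound gives [sum_x a x ^ 2 >= E^2 p > delta^2 p].  Four-wise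
   independence yields [E[Z^2] = sum_x a x ^ 2] and [E[Z^4] <= 3 E[Z^2]^2], and a
   Paley-Zygmund argument bounds [Pr[|Z| >= sqrt(E[Z^2]) / 3]] below by [1/17]. *)

Lemma sqr_le_tail_fourth {R : realType} (t z : R) {A : R} : 0 < A ->
  z ^+ 2 <= t ^+ 2 + 2 * A * (t <= `|z|)%R%:R + z ^+ 4 / (8 * A).
Proof.
move=> A_gt0; have z4_ge0 : 0 <= z ^+ 4 / (8 * A).
  by rewrite divr_ge0 ?exprn_even_ge0 // ltW // mulr_gt0.
have [_ | lt_z_t] := leP t `|z|; rewrite ?(mulr1, mulr0).
- (* AM-GM: [z^2 <= 2 A + z^4 / (8 A)] *)
  have : 0 <= (z ^+ 2 - 4 * A) ^+ 2 / (8 * A) by rewrite divr_ge0 ?sqr_ge0 // ltW ?mulr_gt0.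
  have -> : (z ^+ 2 - 4 * A) ^+ 2 / (8 * A) = z ^+ 4 / (8 * A) + 2 * A - z ^+ 2.
    by field; rewrite gt_eqF.
  by have := sqr_ge0 t; lra.
- rewrite -(real_normK (num_real z)); have := normr_ge0 z; nra.
Qed.

Section Anticoncentration.
Variables (R : realType) (T : finType) (mu Z : T -> R).
Hypotheses (mu_ge0 : forall d, 0 <= mu d) (mu_sum1 : \sum_d mu d = 1).

Lemma fourth_moment_anticoncentration (A t : R) : 0 < A ->
  \sum_d mu d * Z d ^+ 2 = A -> \sum_d mu d * Z d ^+ 4 <= 3 * A ^+ 2 ->
  9 * t ^+ 2 <= A -> 1 / 17 <= \sum_(d | t <= `|Z d|) mu d.
Proof.
move=> A_gt0 EZ2 EZ4 t_small.
rewrite big_mkcond /=; under eq_bigr do rewrite -mulrb -mulr_natr.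
set P := \sum_d _.
have : A <= t ^+ 2 + 2 * A * P + (\sum_d mu d * Z d ^+ 4) / (8 * A).
  rewrite -{1}EZ2 -[t ^+ 2]mul1r -{1}mu_sum1 mulr_sumr !mulr_suml -!big_split /=.
  apply: ler_sum => d _.
  apply: le_trans (ler_wpM2l (mu_ge0 d) (sqr_le_tail_fourth t (Z d) A_gt0)) _.
  by rewrite le_eqVlt; apply/orP; left; apply/eqP; ring.
have : (\sum_d mu d * Z d ^+ 4) / (8 * A) <= 3 / 8 * A.
  by rewrite ler_pdivrMr ?mulr_gt0 //; rewrite expr2 in EZ4; lra.
nra.
Qed.
End Anticoncentration.

Lemma sum_delta {R : pzSemiRingType} {I : finType} (F : I -> R) (x : I) :
  \sum_y (x == y)%:R * F y = F x.
Proof.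
rewrite (bigD1 x) //= eqxx mul1r big1 ?addr0 // => y /negbTE.
by rewrite eq_sym => ->; rewrite mul0r.
Qed.

Lemma sgnbE {R : realType} (b : bool) : sgnb R b = 2 * b%:R - 1.
Proof. by case: b => /=; rewrite ?mulr1 ?mulr0 ?sub0r // addrK. Qed.

Lemma sgnbX {R : realType} (b : bool) (m : nat) :
  sgnb R b ^+ m = if odd m then sgnb R b else 1.
Proof. by case: b => /=; [rewrite expr1n | rewrite -signr_odd]; case: (odd m). Qed.

Definition signed_sum {R : realType} {n : nat} (a : n.-tuple bool -> R)
  (d : {ffun n.-tuple bool -> bool}) : R := \sum_x sgnb R (d x) * a x.

Lemma mul_sgnbb {R : realType} (b : bool) : sgnb R b * sgnb R b = 1.
Proof. by case: b; rewrite /= ?mulrNN mulr1. Qed.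

Section SignMoments.
Variables (R : realType) (n : nat) (mu : {ffun n.-tuple bool -> bool} -> R).
Hypotheses (mu_unif : uniform_signs mu) (mu_indep : fourwise_indep mu).

Lemma ProbE (A : pred {ffun n.-tuple bool -> bool}) :
  Prob mu A = \sum_d mu d * (A d)%:R.
Proof. by rewrite /Prob big_mkcond; apply: eq_bigr => d _; rewrite mulr_natr mulrb. Qed.

Lemma expect_sum (T : finType) (F : {ffun n.-tuple bool -> bool} -> T -> R) :
  \sum_d mu d * \sum_x F d x = \sum_x \sum_d mu d * F d x.
Proof. by under eq_bigr do rewrite mulr_sumr; exact: exchange_big. Qed.

(* Induction on [S], trading one sign [sgnb b = 2 b - 1] for one bit. *)
Lemma expect_bits_signs (B S : seq (n.-tuple bool)) :
  uniq (B ++ S) -> (size (B ++ S) <= 4)%N ->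
  \sum_d mu d * (\prod_(x <- B) (d x)%:R * \prod_(x <- S) sgnb R (d x))
    = 2^-1 ^+ size B * (S == [::])%:R.
Proof.
elim: S B => [|x S IHS] B; rewrite ?cats0 => uniqBS sizeBS.
  have bitsE (d : {ffun n.-tuple bool -> bool}) :
      \prod_(x <- B) ((d x)%:R : R) = (all (fun x => d x == true) B)%:R.
    elim: B {uniqBS sizeBS} => [|y B IHB]; rewrite ?big_nil // big_cons IHB /= eqb_id.
    by case: (d y); rewrite ?mul1r ?mul0r.
  under eq_bigr do rewrite big_nil mulr1 bitsE.
  rewrite -ProbE mu_indep // mulr1 (eq_bigr (fun _ => 2^-1)) => [|y _]; last exact: mu_unif.
  by rewrite big_const_seq count_predT; elim: (size B) => //= m ->; rewrite exprS.
have uniq_xBS : uniq ((x :: B) ++ S) by rewrite -(uniq_catCA B [:: x] S).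
have size_xBS : (size ((x :: B) ++ S) <= 4)%N by move: sizeBS; rewrite !size_cat /= addnS.
have uniq_BS : uniq (B ++ S) by case/andP: uniq_xBS.
have size_BS : (size (B ++ S) <= 4)%N by apply: leq_trans size_xBS.
transitivity (2 * \sum_d mu d * (\prod_(y <- x :: B) (d y)%:R * \prod_(y <- S) sgnb R (d y))
              - \sum_d mu d * (\prod_(y <- B) (d y)%:R * \prod_(y <- S) sgnb R (d y))).
  by rewrite mulr_sumr -sumrB; apply: eq_bigr => d _; rewrite !big_cons sgnbE; ring.
by rewrite IHS // IHS //= exprS; field.
Qed.

Lemma expect_prod_sgnb (L : seq (n.-tuple bool)) : (size L <= 4)%N ->
  \sum_d mu d * \prod_(x <- L) sgnb R (d x)
    = (all (fun x => ~~ odd (count_mem x L)) L)%:R.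
Proof.
move=> sizeL; set odds := [seq x <- undup L | odd (count_mem x L)].
have -> : all (fun x => ~~ odd (count_mem x L)) L = (odds == [::]).
  by rewrite -[RHS]negbK -has_filter (eq_has_r (mem_undup L)) -all_predC.
have := @expect_bits_signs [::] odds; rewrite mul1r => <- //=.
- apply: eq_bigr => d _; rewrite big_nil mul1r -prodr_undup_exp_count big_filter.
  by congr (_ * _); rewrite [RHS]big_mkcond; apply: eq_bigr => x _; rewrite sgnbX.
- by rewrite /= filter_uniq ?undup_uniq.
- by rewrite size_filter (leq_trans (count_size _ _)) // (leq_trans (size_undup _)).
Qed.

Local Ltac decide_eqs := repeat match goal with
  | |- context[?u == ?u] => rewrite eqxx
  | H : is_true (?u != ?v) |- context[?u == ?v] => rewrite (negbTE H)
  | H : is_true (?u != ?v) |- context[?v == ?u] => rewrite [v == u]eq_sym (negbTE H)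
  | |- context[?u == ?v] => case: (eqVneq u v) => [?|?]; [subst|]
  end.

Lemma expect_sgnb2 (x y : n.-tuple bool) :
  \sum_d mu d * (sgnb R (d x) * sgnb R (d y)) = (x == y)%:R.
Proof.
have := expect_prod_sgnb [:: x; y] isT.
under eq_bigr do rewrite !big_cons big_nil mulr1.
by move=> ->; congr _%:R; rewrite /=; decide_eqs.
Qed.

Lemma expect_sgnb4 (x y z w : n.-tuple bool) : x != y ->
  \sum_d mu d * (sgnb R (d x) * sgnb R (d y) * (sgnb R (d z) * sgnb R (d w)))
    = (x == z)%:R * (y == w)%:R + (x == w)%:R * (y == z)%:R.
Proof.
move=> neq_xy.
rewrite (eq_bigr (fun d => mu d * \prod_(v <- [:: x; y; z; w]) sgnb R (d v))).
  by rewrite expect_prod_sgnb //=; decide_eqs; rewrite /=; ring.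
by move=> d _; rewrite !big_cons big_nil mulr1 !mulrA.
Qed.

Variable a : n.-tuple bool -> R.
Local Notation Z := (signed_sum a).

Lemma expect_mul_signed_sum_sqr (f : {ffun n.-tuple bool -> bool} -> R) :
  \sum_d mu d * (f d * Z d ^+ 2)
    = \sum_x \sum_y a x * a y * \sum_d mu d * (f d * (sgnb R (d x) * sgnb R (d y))).
Proof.
under eq_bigr do rewrite /signed_sum expr2 big_distrlr mulr_sumr.
rewrite expect_sum; apply: eq_bigr => x _.
under eq_bigr do rewrite mulr_sumr.
rewrite expect_sum; apply: eq_bigr => y _.
by rewrite mulr_sumr; apply: eq_bigr => d _ /=; ring.
Qed.

Lemma expect_signed_sum_sqr : \sum_d mu d * Z d ^+ 2 = \sum_x a x ^+ 2.
Proof.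
have := expect_mul_signed_sum_sqr (fun _ => 1); under eq_bigr do rewrite mul1r.
move=> ->; apply: eq_bigr => x _.
under eq_bigr do under eq_bigr do rewrite mul1r.
under eq_bigr do rewrite expect_sgnb2 mulrC.
by rewrite sum_delta expr2.
Qed.

Lemma expect_signed_sum_sqr_sgnb2 (x y : n.-tuple bool) : x != y ->
  \sum_d mu d * (Z d ^+ 2 * (sgnb R (d x) * sgnb R (d y))) = 2 * (a x * a y).
Proof.
move=> neq_xy; under eq_bigr do rewrite (mulrC (Z _ ^+ 2)).
rewrite expect_mul_signed_sum_sqr.
under eq_bigr do under eq_bigr do rewrite expect_sgnb4 //.
rewrite (eq_bigr (fun z => (x == z)%:R * (a z * a y) + (y == z)%:R * (a z * a x))).
  by rewrite big_split !sum_delta /=; ring.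
move=> z _; rewrite (eq_bigr (fun w => (y == w)%:R * ((x == z)%:R * (a z * a w))
                                      + (x == w)%:R * ((y == z)%:R * (a z * a w)))).
  by rewrite big_split !sum_delta.
by move=> w _; ring.
Qed.

Lemma expect_signed_sum_4th_le :
  \sum_d mu d * Z d ^+ 4 <= 3 * (\sum_x a x ^+ 2) ^+ 2.
Proof.
set A := \sum_x a x ^+ 2.
under eq_bigr do rewrite (exprD _ 2 2).
rewrite (expect_mul_signed_sum_sqr (fun d => Z d ^+ 2)).
rewrite [leRHS](_ : _ = \sum_x a x ^+ 2 * (3 * A)); last by rewrite -mulr_suml -/A; ring.
apply: ler_sum => x _; rewrite (bigD1 x) //=.
under eq_bigr do rewrite mul_sgnbb mulr1.
rewrite expect_signed_sum_sqr -/A.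
under eq_bigr => y neq_yx do rewrite expect_signed_sum_sqr_sgnb2 1?eq_sym //.
rewrite (eq_bigr (fun y => 2 * a x ^+ 2 * a y ^+ 2)) => [|y _]; last by ring.
have : \sum_(y | y != x) 2 * a x ^+ 2 * a y ^+ 2 <= 2 * a x ^+ 2 * A.
  rewrite /A mulr_sumr [leRHS](bigD1 x) //= lerDr.
  by rewrite -mulrA mulr_ge0 // -expr2 sqr_ge0.
by rewrite -expr2; lra.
Qed.

End SignMoments.

Lemma sum_bits {V : nmodType} {n : nat} (F : seq bool -> V) :
  \sum_(z <- bits n) F z = \sum_(x : n.-tuple bool) F (val x).
Proof. by rewrite /bits big_map big_enum. Qed.

Lemma uniq_bits (n : nat) : uniq (bits n).
Proof. by rewrite /bits map_inj_uniq ?enum_uniq //; exact: val_inj. Qed.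

Lemma mem_bits {n : nat} (x : n.-tuple bool) : val x \in bits n.
Proof. by rewrite /bits map_f ?mem_enum. Qed.

Lemma d1_bits {R : realType} {n : nat} (P Q : seq bool -> R) :
  d1 P (bits n) Q (bits n) = 2^-1 * \sum_(x : n.-tuple bool) `|P (val x) - Q (val x)|.
Proof.
rewrite /d1 undup_cat (undup_id (uniq_bits n)) (eq_in_filter (a2 := pred0)) => [|z ->//].
by rewrite filter_pred0 sum_bits.
Qed.

Lemma lt0_bigmax_fsdist {R : realType} {P : seq bool -> R} {s : seq (seq bool)} :
  is_fsdist P s -> 0 < \big[Num.max/0]_(z <- s) P z.
Proof.
case=> _ _ _ sum1; rewrite ltNge; apply/negP => max_le0.
have : \sum_(z <- s) P z <= 0.
  rewrite big_seq_cond; apply: sumr_le0 => z /andP[zs _].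
  exact: le_trans (le_bigmax_seq _ _ _ _ zs isT) max_le0.
by rewrite sum1 ler10.
Qed.

Lemma Hmin_geP {R : realType} {P : seq bool -> R} {s : seq (seq bool)} (k : R) :
  is_fsdist P s ->
  k <= Hmin P s <-> (forall z, z \in s -> P z <= 2 `^ (- k)).
Proof.
move=> fsP; have max_gt0 := lt0_bigmax_fsdist fsP.
have ln2_gt0 : 0 < ln (2 : R) by rewrite ln_gt0 // ltr1n.
have -> : (k <= Hmin P s) = (\big[Num.max/0]_(z <- s) P z <= 2 `^ (- k)).
  rewrite /Hmin /log2 -mulNr ler_pdivlMr // lerNr -[RHS]ler_ln ?posrE ?powR_gt0 //.
  by rewrite ln_powR mulNr.
split => [max_le z zs | le_p].
  exact: le_trans (le_bigmax_seq _ _ _ _ zs isT) max_le.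
by rewrite big_seq_cond; apply: bigmax_le => [|z /andP[/le_p]//]; exact: powR_ge0.
Qed.

Definition excess {R : realType} {T : finType} (P : T -> R) (c : R) : R :=
  \sum_x Num.max (P x - c) 0.

Lemma excess_ge0 {R : realType} {T : finType} (P : T -> R) (c : R) : 0 <= excess P c.
Proof. by apply: sumr_ge0 => x _; rewrite le_max lexx orbT. Qed.

(* Tangent-line bound [e^2 >= 2 l e - l^2] at [l = E c] on the points where [P > c],
   of which there are at most [1 / c]. *)
Lemma sqr_excess_le_sum_sqr {R : realType} {T : finType} (P Q : T -> R) (c : R) :
  0 < c -> (forall x, 0 <= P x) -> \sum_x P x <= 1 -> (forall x, Q x <= c) ->
  excess P c ^+ 2 * c <= \sum_x (P x - Q x) ^+ 2.
Proof.
move=> c_gt0 P_ge0 P_sum Q_le; set E := excess P c.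
pose e x := Num.max (P x - c) 0; pose above x : R := (c < P x)%R%:R.
have e_sqr_le x : e x ^+ 2 <= (P x - Q x) ^+ 2.
  rewrite /e; have [lt_cP | le_Pc] := ltP c (P x).
    rewrite max_l; last lra.
    by rewrite lerXn2r ?nnegrE //; have := Q_le x; lra.
  by rewrite max_r ?expr0n ?sqr_ge0 //; lra.
have tangent x : 2 * (E * c) * e x - (E * c) ^+ 2 * above x <= e x ^+ 2.
  rewrite /e /above; have [lt_cP | le_Pc] := ltP c (P x).
    rewrite max_l ?mulr1; last lra.
    by rewrite -subr_ge0 (_ : _ - _ = (P x - c - E * c) ^+ 2) ?sqr_ge0 //; ring.
  by rewrite max_r ?mulr0 ?subrr ?expr0n //; lra.
have above_sum : c * \sum_x above x <= 1.
  apply: le_trans P_sum; rewrite mulr_sumr; apply: ler_sum => x _.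
  by rewrite /above; case: ltP => [/ltW|]; rewrite ?mulr1 ?mulr0.
have above_ge0 : 0 <= \sum_x above x by apply: sumr_ge0 => x _; rewrite ler0n.
have : 2 * (E * c) * E - (E * c) ^+ 2 * \sum_x above x <= \sum_x (P x - Q x) ^+ 2.
  apply: le_trans (ler_sum _ (fun x _ => e_sqr_le x)).
  rewrite /E /excess mulr_sumr mulr_sumr -sumrB.
  by apply: ler_sum => x _; exact: tangent.
have E_ge0 : 0 <= E := excess_ge0 P c.
have : 0 <= E ^+ 2 * c * (1 - c * \sum_x above x).
  by rewrite !mulr_ge0 ?sqr_ge0 ?subr_ge0 // ltW.
nra.
Qed.

Lemma sum_fsdist_bits {R : realType} {n : nat} {P : seq bool -> R} :
  is_fsdist P (bits n) -> \sum_(x : n.-tuple bool) P (val x) = 1.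
Proof. by case=> _ _ _; rewrite sum_bits. Qed.

Lemma card_mul_level_ge1 {R : realType} {n : nat} {P : seq bool -> R} (k : R) :
  is_fsdist P (bits n) -> k <= Hmin P (bits n) ->
  1 <= #|{: n.-tuple bool}|%:R * 2 `^ (- k).
Proof.
move=> fsP /(Hmin_geP k fsP) P_le.
rewrite mulr_natl -sumr_const -{1}(sum_fsdist_bits fsP).
by apply: ler_sum => x _; exact: P_le (mem_bits x).
Qed.

(* Cap [P] at level [c] and spread the removed mass [E] proportionally over the room
   [c - min(P, c)] left below the cap; [1 <= 2^n c] makes that room at least [E]. *)
Lemma close_bounded_fsdist_of_excess {R : realType} {n : nat} {P : seq bool -> R} {c delta : R} :
  0 <= c -> (forall z, 0 <= P z) -> \sum_(x : n.-tuple bool) P (val x) = 1 ->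
  1 <= #|{: n.-tuple bool}|%:R * c ->
  excess (fun x : n.-tuple bool => P (val x)) c <= delta ->
  exists Q, [/\ is_fsdist Q (bits n), d1 P (bits n) Q (bits n) <= delta
              & forall z, Q z <= c].
Proof.
move=> c_ge0 P_ge0 P_sum1 room_ge1; set E := excess _ c => E_le.
pose e z := Num.max (P z - c) 0; pose cap z := P z - e z.
have e_ge0 z : 0 <= e z by rewrite le_max lexx orbT.
have cap_le z : cap z <= c by rewrite /cap /e lerBlDr addrC -lerBlDr le_max lexx.
have cap_ge0 z : 0 <= cap z by rewrite subr_ge0 ge_max P_ge0 lerBlDr lerDl c_ge0.
have cap_sum : \sum_(x : n.-tuple bool) cap (val x) = 1 - E by rewrite sumrB P_sum1.
set room := \sum_(x : n.-tuple bool) (c - cap (val x)).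
have E_le_room : E <= room by rewrite /room sumrB cap_sum sumr_const; lra.
have E_ge0 : 0 <= E := excess_ge0 _ c.
pose lam := E / room.
have lam_room : lam * room = E.
  have [room0 | room_neq0] := eqVneq room 0; last by rewrite divfK.
  by rewrite /lam room0 invr0 !mulr0; apply/eqP; rewrite eq_le E_ge0 -room0 E_le_room.
have lam_ge0 : 0 <= lam by rewrite divr_ge0 // (le_trans E_ge0).
have lam_le1 : lam <= 1.
  have [room0 | room_neq0] := eqVneq room 0; first by rewrite /lam room0 invr0 mulr0.
  by rewrite ler_pdivrMr ?mul1r // lt_def room_neq0 (le_trans E_ge0).
pose Q z := if z \in bits n then cap z + lam * (c - cap z) else 0.
have QE (x : n.-tuple bool) : Q (val x) = cap (val x) + lam * (c - cap (val x)).
  by rewrite /Q mem_bits.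
exists Q; split.
- split; first exact: uniq_bits.
  + move=> z; rewrite /Q; case: ifP => // _.
    by rewrite addr_ge0 ?cap_ge0 // mulr_ge0 // subr_ge0 cap_le.
  + by move=> z /negbTE; rewrite /Q => ->.
  rewrite sum_bits; under eq_bigr do rewrite QE.
  by rewrite big_split /= -mulr_sumr lam_room cap_sum subrK.
- rewrite d1_bits; apply: le_trans E_le.
  have : \sum_(x : n.-tuple bool) `|P (val x) - Q (val x)|
           <= \sum_(x : n.-tuple bool) (e (val x) + lam * (c - cap (val x))).
    apply: ler_sum => x _; rewrite QE (_ : P _ - _ = e (val x) - lam * (c - cap (val x))).
      by rewrite (le_trans (ler_normB _ _)) // !ger0_norm // mulr_ge0 // subr_ge0 cap_le.
    by rewrite /cap; ring.
  by rewrite big_split /= -mulr_sumr lam_room (_ : \sum_x e (val x) = E) //; lra.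
- move=> z; rewrite /Q; case: ifP => // _.
  by have := cap_le z; have := cap_ge0 z; nra.
Qed.

Lemma lt_excess_smooth_minent {R : realType} {n : nat} {k delta : R} {PX : seq bool -> R} :
  is_fsdist PX (bits n) ->
  (exists h : R, is_smooth_minent delta PX (bits n) h /\ h < k) ->
  1 <= #|{: n.-tuple bool}|%:R * 2 `^ (- k) ->
  delta < excess (fun x : n.-tuple bool => PX (val x)) (2 `^ (- k)).
Proof.
move=> fsX [h [[_ smooth_le] lt_hk]] room_ge1; rewrite ltNge; apply/negP => E_le.
have [_ PX_ge0 _ _] := fsX.
have [Q [fsQ dQ Q_le]] := close_bounded_fsdist_of_excess
  (powR_ge0 _ _) PX_ge0 (sum_fsdist_bits fsX) room_ge1 E_le.
have := smooth_le Q _ fsQ dQ; have : k <= Hmin Q (bits n) by apply/(Hmin_geP k fsQ).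
lra.
Qed.

Theorem corollary5 (R : realType) (n : nat) (k delta : R)
  (PX PY : seq bool -> R) (mu : {ffun n.-tuple bool -> bool} -> R) :
  0 <= delta ->
  is_fsdist PX (bits n) ->
  (exists h : R, is_smooth_minent delta PX (bits n) h /\ h < k) ->
  is_fsdist PY (bits n) ->
  k <= Hmin PY (bits n) ->
  is_pmf mu -> uniform_signs mu -> fourwise_indep mu ->
  1 / 17 <= Prob mu (fun d => 3^-1 * (2 `^ (- k / 2)) * delta <= Adv d PX PY).
Proof.
move=> delta_ge0 fsX smoothX fsY HY_ge [mu_ge0 mu_sum1] mu_unif mu_indep.
have := lt_excess_smooth_minent fsX smoothX (card_mul_level_ge1 k fsY HY_ge).
set p := 2 `^ (- k); set E := excess _ p => delta_lt_E.
have PY_le (x : n.-tuple bool) : PY (val x) <= p.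
  exact: (iffLR (Hmin_geP k fsY)) HY_ge _ (mem_bits x).
pose a (x : n.-tuple bool) := PX (val x) - PY (val x); set A := \sum_x a x ^+ 2.
have A_ge : E ^+ 2 * p <= A.
  have [_ PX_ge0 _ _] := fsX.
  by apply: sqr_excess_le_sum_sqr => //; rewrite ?powR_gt0 ?(sum_fsdist_bits fsX).
have E_ge0 := le_trans delta_ge0 (ltW delta_lt_E).
have q_sqr : 2 `^ (- k / 2) ^+ 2 = p.
  by rewrite expr2 -powRD ?pnatr_eq0 ?implybT //; congr (_ `^ _); field.
apply: (fourth_moment_anticoncentration _ _ _ (signed_sum a) mu_ge0 mu_sum1 A).
- by apply: lt_le_trans A_ge; rewrite mulr_gt0 ?powR_gt0 // exprn_gt0 // (le_lt_trans delta_ge0).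
- exact: expect_signed_sum_sqr.
- exact: expect_signed_sum_4th_le.
- apply: le_trans A_ge; rewrite -q_sqr.
  have -> : 9 * (3^-1 * 2 `^ (- k / 2) * delta) ^+ 2 = delta ^+ 2 * 2 `^ (- k / 2) ^+ 2.
    by field.
  by rewrite ler_wpM2r ?sqr_ge0 // ler_sqr ?nnegrE // ltW.
Qed.
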